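(* Let $\Phi_0$ be a finite reduced root system with simple roots $\{\alpha_i\mid i\in I_0\}$, root lattice $Q_0=\bigoplus_{i\in I_0}\mathbb{Z}\alpha_i$, $Q_{0,+}=\bigoplus_{i\in I_0}\mathbb{N}\alpha_i$, and Weyl group $W_0$. Let $P\subseteq Q_{0,+}\cup(-Q_{0,+})$ be a $W_0$-stable subset. Then every $\alpha\in P$ is $W_0$-conjugate to an integer multiple of a simple root. *)

From HB Require Import structures.
From mathcomp Require Import all_boot all_order all_algebra.
From mathcomp Require Import reals.
Set Implicit Arguments. Unset Strict Implicit. Unset Printing Implicit Defensive.
Import Order.TTheory GRing.Theory Num.Theory.
Local Open Scope ring_scope.

Definition dot (R : realType) (n : nat) (u v : 'rV[R]_n) : R := (u *m v^T) 0 0.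

Definition refl (R : realType) (n : nat) (a v : 'rV[R]_n) : 'rV[R]_n :=
  v - ((2 * dot v a) / dot a a) *: a.

Definition reduced_root_system (R : realType) (n : nat) (Phi : seq 'rV[R]_n) : Prop :=
  [/\ 0 \notin Phi,
      (forall v : 'rV[R]_n, exists c : 'I_(size Phi) -> R,
          v = \sum_(i < size Phi) c i *: Phi`_i),
      (forall a b, a \in Phi -> b \in Phi -> refl a b \in Phi),
      (forall a b, a \in Phi -> b \in Phi -> (2 * dot b a) / dot a a \is a Num.int) &
      (forall a (c : R), a \in Phi -> c *: a \in Phi -> c = 1 \/ c = -1)].

Definition in_Qplus (R : realType) (n : nat) (I : finType) (alpha : I -> 'rV[R]_n)
  (v : 'rV[R]_n) : Prop :=
  exists c : I -> nat, v = \sum_(i : I) (c i)%:R *: alpha i.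

Definition simple_roots (R : realType) (n : nat) (Phi : seq 'rV[R]_n)
  (I : finType) (alpha : I -> 'rV[R]_n) : Prop :=
  [/\ (forall i, alpha i \in Phi),
      (forall c : I -> R, \sum_(i : I) c i *: alpha i = 0 -> forall i, c i = 0) &
      (forall b, b \in Phi -> in_Qplus alpha b \/ in_Qplus alpha (- b))].

(* The Weyl group W_0: maps V -> V that are finite composites of the
   reflections s_a, a in Phi (the generated monoid is already a group, the
   generators being involutions). *)
Inductive weyl (R : realType) (n : nat) (Phi : seq 'rV[R]_n) : ('rV[R]_n -> 'rV[R]_n) -> Prop :=
  | weyl_id : weyl Phi id
  | weyl_step a w : a \in Phi -> weyl Phi w -> weyl Phi (refl a \o w).

From HB Require Import structures.
From mathcomp Require Import all_boot all_order all_algebra.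
From mathcomp Require Import reals zify.
Import Order.TTheory GRing.Theory Num.Theory.
Local Open Scope ring_scope.

(** Induction on the height of [v = \sum_i c_i alpha_i] in [Q_{0,+}].  If [v]
   is not a multiple of a simple root, then [v <> 0], and since
   [(v, v) = \sum_i c_i (v, alpha_i) > 0] some [(v, alpha_i)] is positive, so
   [s_i v = v - k alpha_i] with [k] a positive integer.  As [s_i v] lies in [P],
   it is in [Q_{0,+}] or in [-Q_{0,+}]; the latter is impossible because [v]
   has a positive coefficient [c_j] with [j <> i], which [s_i] does not change.
   So [s_i v] is in [Q_{0,+}] and has smaller height.  Roots of [P] in
   [-Q_{0,+}] are handled by applying this to [-P], as the Weyl group acts
   linearly. *)

Section Dot.
Context {R : realType} {n : nat}.
Implicit Types (u v w : 'rV[R]_n).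

Lemma dot0l w : dot 0 w = 0.
Proof. by rewrite /dot mul0mx mxE. Qed.

Lemma dotDl u v w : dot (u + v) w = dot u w + dot v w.
Proof. by rewrite /dot mulmxDl mxE. Qed.

Lemma dotZl (k : R) u w : dot (k *: u) w = k * dot u w.
Proof. by rewrite /dot -scalemxAl mxE. Qed.

Lemma dotNl u w : dot (- u) w = - dot u w.
Proof. by rewrite -scaleN1r dotZl mulN1r. Qed.

Lemma dotC u w : dot u w = dot w u.
Proof. by rewrite /dot !mxE; apply: eq_bigr => j _; rewrite !mxE mulrC. Qed.

Lemma dot_suml (J : Type) (r : seq J) (F : J -> 'rV[R]_n) w :
  dot (\sum_(j <- r) F j) w = \sum_(j <- r) dot (F j) w.
Proof.
elim: r => [|x r IH]; first by rewrite !big_nil dot0l.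
by rewrite !big_cons dotDl IH.
Qed.

Lemma dot_self_gt0 v : v != 0 -> 0 < dot v v.
Proof.
move=> v_neq0.
have dot_sqr : dot v v = \sum_j v 0 j ^+ 2.
  by rewrite /dot mxE; apply: eq_bigr => j _; rewrite mxE expr2.
rewrite dot_sqr lt_def sumr_ge0 ?andbT; last by move=> j _; exact: sqr_ge0.
apply: contra v_neq0 => /eqP/(psumr_eq0P (fun j _ => sqr_ge0 (v 0 j))) sqr0.
by apply/eqP/rowP => j; rewrite mxE; apply/eqP; rewrite -sqrf_eq0 sqr0.
Qed.

Lemma reflN a v : refl a (- v) = - refl a v.
Proof. by rewrite /refl dotNl mulrN mulNr scaleNr opprD. Qed.

End Dot.

Section Weyl.
Context {R : realType} {n : nat} {Phi : seq 'rV[R]_n}.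

Lemma weyl_refl a : a \in Phi -> weyl Phi (refl a).
Proof. by move=> Phi_a; exact: (weyl_step Phi_a (weyl_id Phi)). Qed.

Lemma weyl_comp w1 w2 : weyl Phi w1 -> weyl Phi w2 -> weyl Phi (w1 \o w2).
Proof. by move=> + W2; elim=> // a w Phi_a _ IH; exact: weyl_step. Qed.

Lemma weylN w : weyl Phi w -> forall v, w (- v) = - w v.
Proof. by elim=> //= a w' _ _ IH v; rewrite IH reflN. Qed.

End Weyl.

Section SimpleRoots.
Context {R : realType} {n : nat} {Phi : seq 'rV[R]_n}.
Context {I : finType} {alpha : I -> 'rV[R]_n}.
Hypotheses (Phi_root : reduced_root_system Phi) (alpha_simple : simple_roots Phi alpha).

Lemma root_exists : (0 < n)%N -> exists b, b \in Phi.
Proof.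
move=> n_gt0; case: Phi_root => _ span _ _ _.
have [Phi_gt0|] := ltnP 0 (size Phi); first by exists Phi`_0; exact: mem_nth.
rewrite leqn0 => /eqP Phi0; have [c] := span (const_mx 1).
rewrite big1 => [/matrixP/(_ 0 (Ordinal n_gt0))|i]; last by have := ltn_ord i; rewrite {2}Phi0.
by rewrite !mxE => /eqP; rewrite oner_eq0.
Qed.

Lemma card_simple_index_gt0 : (0 < n)%N -> (0 < #|I|)%N.
Proof.
move=> /root_exists[b Phi_b]; rewrite lt0n; apply/negP => /eqP I_empty.
have sum0 (F : I -> 'rV[R]_n) : \sum_i F i = 0.
  by rewrite big1 // => i; have := fintype0 i I_empty.
case: Phi_root alpha_simple => Phi_neq0 _ _ _ _ [_ _ /(_ b Phi_b) b_signed].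
have b0 : b = 0.
  by case: b_signed => -[c]; rewrite sum0 // => /eqP; rewrite oppr_eq0 => /eqP.
by move: Phi_neq0; rewrite -b0 Phi_b.
Qed.

Lemma simple_coord_inj (c d : I -> R) :
  \sum_i c i *: alpha i = \sum_i d i *: alpha i -> c =1 d.
Proof.
case: alpha_simple => _ indep _ cd_eq i; apply/eqP; rewrite -subr_eq0; apply/eqP.
apply: (indep (fun i => c i - d i)).
under eq_bigr do rewrite scalerBl.
by rewrite sumrB cd_eq subrr.
Qed.

Lemma simple_neq0 i : alpha i != 0.
Proof.
case: Phi_root alpha_simple => Phi_neq0 _ _ _ _ [Phi_alpha _ _].
by apply: contraNneq Phi_neq0 => <-.
Qed.

Lemma cartan_comb_int (c : I -> int) a : a \in Phi ->
  2 * dot (\sum_i (c i)%:~R *: alpha i) a / dot a a \is a Num.int.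
Proof.
move=> Phi_a; case: Phi_root alpha_simple => _ _ _ cartan_int _ [Phi_alpha _ _].
rewrite dot_suml mulr_sumr mulr_suml rpred_sum // => i _.
by rewrite dotZl mulrCA -mulrA rpredM ?rpred_int ?cartan_int.
Qed.

Lemma nonneg_comb_dot_gt0 (c : I -> R) : (forall i, 0 <= c i) ->
  \sum_i c i *: alpha i != 0 -> exists i, 0 < dot (\sum_i c i *: alpha i) (alpha i).
Proof.
set v := \sum_i _ => c_ge0 v_neq0.
have [i|no_pos] := pickP (fun i => 0 < dot v (alpha i)); first by exists i.
have : dot v v <= 0.
  rewrite {1}/v dot_suml sumr_le0 // => i _.
  by rewrite dotZl dotC mulr_ge0_le0 // leNgt no_pos.
by rewrite leNgt dot_self_gt0.
Qed.

Lemma simple_refl_descent (c : I -> nat) (v := \sum_i (c i)%:R *: alpha i) :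
  v != 0 -> exists i (k : nat), (0 < k)%N /\ refl (alpha i) v = v - k%:R *: alpha i.
Proof.
move=> v_neq0.
have [i dot_gt0] := nonneg_comb_dot_gt0 _ (fun i => ler0n R (c i)) v_neq0.
have alpha_gt0 := dot_self_gt0 _ (simple_neq0 i).
have Phi_i : alpha i \in Phi by case: alpha_simple.
set k := 2 * dot v (alpha i) / dot (alpha i) (alpha i).
have k_gt0 : 0 < k by rewrite divr_gt0 ?mulr_gt0.
have k_int : k \is a Num.int by exact: (cartan_comb_int (fun i => (c i)%:Z)).
have [K kK] : exists K : nat, k = K%:R by apply/natrP; rewrite -intrEge0 // ltW.
exists i, K; split; first by rewrite -(ltr0n R) -kK.
by rewrite /refl -/k kK.
Qed.

Lemma simple_sub_coord (c : I -> R) i k :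
  \sum_t c t *: alpha t - k *: alpha i = \sum_t (c t - (t == i)%:R * k) *: alpha t.
Proof.
have delta : \sum_t ((t == i)%:R * k) *: alpha t = k *: alpha i.
  rewrite (bigD1 i) //= eqxx mul1r big1 ?addr0 // => t /negbTE->.
  by rewrite mul0r scale0r.
by symmetry; under eq_bigr do rewrite scalerBl; rewrite sumrB delta.
Qed.

Lemma Qplus_sub_simple (c : I -> nat) i j k (v := \sum_t (c t)%:R *: alpha t) :
  j != i -> c j != 0%N ->
  in_Qplus alpha (v - k%:R *: alpha i) \/ in_Qplus alpha (- (v - k%:R *: alpha i)) ->
  exists e : I -> nat, v - k%:R *: alpha i = \sum_t (e t)%:R *: alpha t
                       /\ (\sum_t e t + k = \sum_t c t)%N.
Proof.
move=> j_neq_i cj_neq0; rewrite /v simple_sub_coord.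
case=> -[e e_coord]; last first.
  have neg_coord : \sum_t ((c t)%:R - (t == i)%:R * k%:R) *: alpha t
                 = \sum_t (- (e t)%:R) *: alpha t.
    by rewrite -[LHS]opprK e_coord -sumrN; apply: eq_bigr => t _; rewrite scaleNr.
  move: (simple_coord_inj _ _ neg_coord j); rewrite (negbTE j_neq_i) mul0r subr0.
  move/eqP; rewrite -subr_eq0 opprK -natrD pnatr_eq0 addn_eq0 => /andP[cj0 _].
  by rewrite cj0 in cj_neq0.
exists e; split => //; apply/eqP; rewrite -(eqr_nat R) natrD !natr_sum.
under eq_bigr => t _ do rewrite -(simple_coord_inj _ _ e_coord t).
have delta : \sum_t (t == i)%:R * k%:R = k%:R :> R.
  by rewrite (bigD1 i) //= eqxx mul1r big1 ?addr0 // => t /negbTE->; rewrite mul0r.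
by rewrite sumrB delta subrK.
Qed.

End SimpleRoots.

Section Descent.
Context {R : realType} {n : nat} {Phi : seq 'rV[R]_n}.
Context {I : finType} {alpha : I -> 'rV[R]_n}.
Hypotheses (Phi_root : reduced_root_system Phi) (alpha_simple : simple_roots Phi alpha).
Context {P : 'rV[R]_n -> Prop}.
Hypothesis P_signed : forall v, P v -> in_Qplus alpha v \/ in_Qplus alpha (- v).
Hypothesis P_weyl : forall w, weyl Phi w -> forall v, P v -> P (w v).

Lemma Qplus_weyl_conj_simple_multiple (i0 : I) (c : I -> nat)
    (v := \sum_i (c i)%:R *: alpha i) :
  P v -> exists w, weyl Phi w /\ exists (i : I) (m : int), w v = m%:~R *: alpha i.
Proof.
have [h] := ubnP (\sum_i c i); elim: h c @v => // h IH c v c_lt Pv.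
have [i single_i|not_single] := pickP (fun i => [forall j, (j != i) ==> (c j == 0%N)]).
  exists id; split; first exact: weyl_id.
  exists i, (c i)%:Z; rewrite /v (bigD1 i) //= big1 ?addr0 // => j j_neq_i.
  by move/forallP/(_ j): single_i; rewrite j_neq_i => /eqP->; rewrite scale0r.
have other_coord i : exists2 j, j != i & c j != 0%N.
  by move/negbT/forallPn: (not_single i) => -[j]; rewrite negb_imply => /andP[]; exists j.
have v_neq0 : v != 0.
  have [j _ cj_neq0] := other_coord i0; apply: contra cj_neq0 => /eqP v0.
  have zero_coord : \sum_t (c t)%:R *: alpha t = \sum_t 0 *: alpha t.
    by rewrite -/v v0 big1 // => t _; rewrite scale0r.
  by rewrite -(eqr_nat R) (simple_coord_inj alpha_simple _ _ zero_coord j).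
have [i [k [k_gt0 refl_v]]] := simple_refl_descent Phi_root alpha_simple _ v_neq0.
have [j j_neq_i cj_neq0] := other_coord i.
have Phi_i : alpha i \in Phi by case: alpha_simple.
have P_desc : P (v - k%:R *: alpha i).
  by rewrite -refl_v; exact: P_weyl _ (weyl_refl _ Phi_i) _ Pv.
have [e [e_coord e_height]] :=
  Qplus_sub_simple alpha_simple _ _ _ _ j_neq_i cj_neq0 (P_signed _ P_desc).
have P_e : P (\sum_t (e t)%:R *: alpha t) by rewrite -e_coord.
have [|w [W [i' [m wv]]]] := IH e _ P_e; first by lia.
exists (w \o refl (alpha i)); split; first exact: weyl_comp _ _ W (weyl_refl _ Phi_i).
by exists i', m; rewrite /= refl_v e_coord.
Qed.

End Descent.

Theorem lemma8p19 (R : realType) (n : nat) (Phi : seq 'rV[R]_n)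
  (I : finType) (alpha : I -> 'rV[R]_n) (P : 'rV[R]_n -> Prop) :
  (0 < n)%N ->
  reduced_root_system Phi ->
  simple_roots Phi alpha ->
  (forall v, P v -> in_Qplus alpha v \/ in_Qplus alpha (- v)) ->
  (forall w, weyl Phi w -> forall v, P v -> P (w v)) ->
  forall a, P a ->
    exists w, weyl Phi w /\ exists (i : I) (m : int), w a = m%:~R *: alpha i.
Proof.
move=> n_gt0 Phi_root alpha_simple P_signed P_weyl a Pa.
have /card_gt0P[i0 _] := card_simple_index_gt0 Phi_root alpha_simple n_gt0.
have [[c a_coord]|[c a_coord]] := P_signed a Pa.
  by rewrite a_coord in Pa *;
    exact (Qplus_weyl_conj_simple_multiple Phi_root alpha_simple P_signed P_weyl i0 c Pa).
pose Pneg v := P (- v).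
have Pneg_signed v : Pneg v -> in_Qplus alpha v \/ in_Qplus alpha (- v).
  by move/P_signed; rewrite opprK => -[]; [right | left].
have Pneg_weyl w : weyl Phi w -> forall v, Pneg v -> Pneg (w v).
  by move=> W v; rewrite /Pneg -(weylN _ W); exact: P_weyl.
have Pneg_c : Pneg (\sum_i (c i)%:R *: alpha i) by rewrite /Pneg -a_coord opprK.
have [w [W [i [m wa]]]] :=
  Qplus_weyl_conj_simple_multiple Phi_root alpha_simple Pneg_signed Pneg_weyl i0 c Pneg_c.
exists w; split => //; exists i, (- m).
by rewrite -[a]opprK a_coord (weylN _ W) wa intrN scaleNr.
Qed.
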